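(* Let $G$ be a finite group and $R_G = \{(g,h)\in G^2 \mid [g,h]=1\}$. Then $R_G$ admits a Mal'tsev polymorphism if and only if $G$ is abelian.
   Context: Here $[g,h]=ghg^{-1}h^{-1}$. For an $n$-ary relation $R\subseteq A^n$, a $d$-ary polymorphism of $R$ is a map $f:A^d\to A$ such that whenever $d$ tuples $(x_{1,1},\dots,x_{1,n}),\dots,(x_{d,1},\dots,x_{d,n})$ lie in $R$, the tuple obtained by applying $f$ coordinatewise, $(f(x_{1,1},\dots,x_{d,1}),\dots,f(x_{1,n},\dots,x_{d,n}))$, also lies in $R$. A Mal'tsev polymorphism is a ternary polymorphism $f$ with $f(x,x,y)=f(y,x,x)=y$ for all $x,y\in A$. *)

From mathcomp Require Import all_boot all_fingroup.
Set Implicit Arguments. Unset Strict Implicit. Unset Printing Implicit Defensive.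
Local Open Scope group_scope.

Definition paper_comm (gT : finGroupType) (g h : gT) : gT := g * h * g^-1 * h^-1.

Definition RG (gT : finGroupType) (g h : gT) : Prop := paper_comm g h = 1.

Definition is_polymorphism3 (A : Type) (R : A -> A -> Prop) (f : A -> A -> A -> A) : Prop :=
  forall x1 y1 x2 y2 x3 y3, R x1 y1 -> R x2 y2 -> R x3 y3 -> R (f x1 x2 x3) (f y1 y2 y3).

Definition is_maltsev_polymorphism (A : Type) (R : A -> A -> Prop) (f : A -> A -> A -> A) : Prop :=
  is_polymorphism3 R f /\ (forall x y, f x x y = y) /\ (forall x y, f y x x = y).

(* A Mal'tsev polymorphism f of any binary relation R makes it rectangular:
   applying f to the pairs (a,b), (c,b), (c,d) yields (f a c c, f b b d) = (a,d),
   so R a b, R c b and R c d force R a d.  For R = R_G and b = c = 1 this says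
   that any x and y commute.  Conversely, in an abelian group R_G is the full
   relation, and x y^-1 z is a Mal'tsev operation in every group. *)

From mathcomp Require Import all_boot all_fingroup.

Set Implicit Arguments.
Unset Strict Implicit.
Unset Printing Implicit Defensive.

Local Open Scope group_scope.

Lemma RG_commute (gT : finGroupType) (x y : gT) : RG x y <-> commute x y.
Proof.
rewrite /RG /paper_comm /commute; split=> [xyx'y' | ->]; last by rewrite mulgK mulgV.
have /eqP conj_y : x * y * x^-1 == y by rewrite eq_mulgV1 xyx'y'.
by rewrite -{2}conj_y mulgKV.
Qed.

Lemma maltsev_rectangular (A : Type) (R : A -> A -> Prop) (f : A -> A -> A -> A) :
  is_maltsev_polymorphism R f ->
  forall a b c d, R a b -> R c b -> R c d -> R a d.
Proof.
move=> [polyf [fxxy fyxx]] a b c d Rab Rcb Rcd.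
by rewrite -(fyxx c a) -(fxxy b d); apply: polyf.
Qed.

Lemma abelianT_RG (gT : finGroupType) :
  abelian [set: gT] <-> forall x y : gT, RG x y.
Proof.
split=> [/centsP cT x y | RGT].
  by apply/RG_commute/cT; rewrite inE.
by apply/centsP=> x _ y _; apply/RG_commute.
Qed.

Theorem lemma2p4 (gT : finGroupType) :
  (exists f : gT -> gT -> gT -> gT, is_maltsev_polymorphism (@RG gT) f) <->
  abelian [set: gT].
Proof.
split=> [[f maltsevf] | /abelianT_RG RGT].
  apply/abelianT_RG=> x y.
  apply: (maltsev_rectangular maltsevf (b := 1) (c := 1)); apply/RG_commute.
  - exact: commute1.
  - exact: commute_refl.
  - exact/commute_sym/commute1.
exists (fun x y z => x * y^-1 * z).
split; first by move=> *; apply: RGT.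
by split=> x y; [rewrite mulgV mul1g | rewrite mulgKV].
Qed.
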